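(* For $k,\ell\in\mathbb Z_{\ge0}$ and $s\in\mathbb C$: $p_+^{(k,\ell)}(t)=\sum_{m=0}^{\ell}k^{\underline m}P_m^{(\ell-m,-m)}(0)t^m$ if $k\ge\ell$, and $=\sum_{m=0}^{k}\ell^{\underline m}P_m^{(k-m,-m)}(0)t^m$ if $k<\ell$; $p_-^{(k,\ell)}(t)=\sum_{m=0}^{\ell}k^{\underline m}P_m^{(-m,\ell-m)}(0)t^m$ if $k\ge\ell$, and $=\sum_{m=0}^{k}\ell^{\underline m}P_m^{(-m,k-m)}(0)t^m$ if $k<\ell$; $p_c^{(s;k)}(t)=\sum_{m=0}^kk^{\underline m}P_m^{(\frac{k+s-2m}2,\frac{k-s-2m}2)}(0)t^m$. In particular $p_c^{(\pm k;k)}(t)=p_\pm^{(k,k)}(t)$.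
   Context: $r^{\underline m}=r(r-1)\cdots(r-m+1)$, $r^{\overline m}=r(r+1)\cdots(r+m-1)$ (empty products $=1$). For complex $a$ and $m\in\mathbb Z_{\ge0}$, $\binom am=a(a-1)\cdots(a-m+1)/m!$. Jacobi polynomials: $P_m^{(\alpha,\beta)}(z)=\sum_{j=0}^m\binom{m+\alpha}{m-j}\binom{m+\beta}{j}\big(\frac{z-1}2\big)^j\big(\frac{z+1}2\big)^{m-j}$ for $\alpha,\beta\in\mathbb C$. Cayley continuants $\mathrm{Cay}_m(x;y)=\sum_{j=0}^m\binom mj(\frac{x+y}2)^{\underline j}(\frac{x-y}2)^{\overline{m-j}}$ (the tridiagonal $m\times m$ determinant with diagonal $x$, superdiagonal $1,\dots,m-1$, subdiagonal $y,y-1,\dots,y-m+2$). Polynomials: $p_\pm^{(k,\ell)}(t)=\sum_{m=0}^{\min(k,\ell)}\frac{(\pm1)^m}{2^m}m!\binom km\binom\ell mt^m$, $p_c^{(s;k)}(t)=\sum_{m=0}^k\frac1{2^m}\binom km\mathrm{Cay}_m(s;k)t^m$. *)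

From HB Require Import structures.
From mathcomp Require Import all_boot all_order all_algebra.
From mathcomp Require Import complex.
From mathcomp Require Import reals.
Set Implicit Arguments. Unset Strict Implicit. Unset Printing Implicit Defensive.
Import Order.TTheory GRing.Theory Num.Theory.
Local Open Scope ring_scope.

Section Defs.
Variable F : fieldType.

Definition falling (r : F) (m : nat) : F := \prod_(i < m) (r - i%:R).
Definition rising (r : F) (m : nat) : F := \prod_(i < m) (r + i%:R).
Definition binomC (a : F) (m : nat) : F := falling a m / (m`!)%:R.

Definition jacobi (m : nat) (alpha beta z : F) : F :=
  \sum_(j < m.+1) binomC (m%:R + alpha) (m - j) * binomC (m%:R + beta) j
     * ((z - 1) / 2%:R) ^+ j * ((z + 1) / 2%:R) ^+ (m - j).

Definition cay (m : nat) (x y : F) : F :=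
  \sum_(j < m.+1) ('C(m, j))%:R * falling ((x + y) / 2%:R) j
     * rising ((x - y) / 2%:R) (m - j).

Definition p_plus (k l : nat) : {poly F} :=
  \sum_(m < (minn k l).+1)
     ((1 / 2%:R ^+ m) * (m`!)%:R * ('C(k, m))%:R * ('C(l, m))%:R) *: 'X^m.
Definition p_minus (k l : nat) : {poly F} :=
  \sum_(m < (minn k l).+1)
     ((-1) ^+ m / 2%:R ^+ m * (m`!)%:R * ('C(k, m))%:R * ('C(l, m))%:R) *: 'X^m.

Definition p_c (s : F) (k : nat) : {poly F} :=
  \sum_(m < k.+1) ((1 / 2%:R ^+ m) * ('C(k, m))%:R * cay m s k%:R) *: 'X^m.
End Defs.

(** At [z = 0] the Jacobi polynomial [P_m^(a-m, b-m)] is, up to the factor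
    [2^-m], the signed convolution [sum_j binom(a, m-j) binom(b, j) (-1)^j],
    i.e. the coefficient of [t^m] in [(1+t)^a (1-t)^b].  For [(a, b) = (l, 0)]
    and [(0, l)] only one term survives, giving [binom(l, m)] and
    [(-1)^m binom(l, m)], whence the formulas for [p_+] and [p_-]; reversing
    the Vandermonde-type sum defining [Cay_m(x; y)] shows that it is [m!] times
    the same convolution at [a = (x+y)/2], [b = (y-x)/2], whence the formula
    for [p_c].  The case [k < l] follows by symmetry in [k] and [l], and
    [s = +-k] makes the Jacobi parameters of [p_c] coincide with those of
    [p_+-^(k,k)]. *)
From HB Require Import structures.
From mathcomp Require Import all_boot all_order all_algebra.
From mathcomp Require Import complex.
From mathcomp Require Import reals.
From mathcomp Require Import ring.

Import Order.TTheory GRing.Theory Num.Theory.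
Local Open Scope ring_scope.

Section JacobiAtZero.
Variable F : numFieldType.
Implicit Types (a b x y s : F) (k l m : nat).

Let two_neq0 : (2%:R : F) != 0. Proof. by rewrite pnatr_eq0. Qed.

Lemma falling_nat k m : falling (k%:R : F) m = ('C(k, m) * m`!)%:R.
Proof.
rewrite bin_ffact; elim: m => [|m IH]; first by rewrite /falling big_ord0.
rewrite /falling big_ord_recr /= -/(falling _ _) IH ffactnSr natrM.
case: (leqP m k) => [le_mk | lt_km]; first by rewrite natrB.
by rewrite ffact_small // !mul0r.
Qed.

Lemma fact_natr_neq0 m : (m`!%:R : F) != 0.
Proof. by rewrite pnatr_eq0 -lt0n fact_gt0. Qed.

Lemma binomC_nat k m : binomC (k%:R : F) m = 'C(k, m)%:R.
Proof. by rewrite /binomC falling_nat natrM mulfK ?fact_natr_neq0. Qed.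

Lemma binomC0 m : binomC (0 : F) m = (m == 0%N)%:R.
Proof. by have := binomC_nat 0 m; rewrite bin0n. Qed.

Lemma falling_binomC a m : falling a m = binomC a m * m`!%:R.
Proof. by rewrite /binomC divfK ?fact_natr_neq0. Qed.

Lemma rising_falling a m : rising a m = (-1) ^+ m * falling (- a) m.
Proof.
rewrite /rising /falling -[m in (-1) ^+ m](card_ord m) -prodrN.
by apply: eq_bigr => i _; rewrite opprB opprK addrC.
Qed.

Definition signed_binom_conv a b m : F :=
  \sum_(j < m.+1) binomC a (m - j) * binomC b j * (-1) ^+ j.

Lemma signed_binom_conv_nat0 l m : signed_binom_conv l%:R 0 m = 'C(l, m)%:R.
Proof.
rewrite /signed_binom_conv big_ord_recl big1 => [|j _].
  by rewrite subn0 binomC_nat binomC0 expr0 !mulr1 addr0.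
by rewrite binomC0 /= mulr0 mul0r.
Qed.

Lemma signed_binom_conv_0nat l m :
  signed_binom_conv 0 l%:R m = (-1) ^+ m * 'C(l, m)%:R.
Proof.
rewrite /signed_binom_conv big_ord_recr big1 => [|j _] /=.
  by rewrite subnn binomC0 binomC_nat add0r mul1r mulrC.
by rewrite binomC0 subn_eq0 leqNgt ltn_ord !mul0r.
Qed.

Lemma jacobi_at0 m a b :
  jacobi m (a - m%:R) (b - m%:R) 0 = signed_binom_conv a b m / 2%:R ^+ m.
Proof.
rewrite /jacobi /signed_binom_conv mulr_suml; apply: eq_bigr => j _.
have le_jm : (j <= m)%N by rewrite -ltnS.
rewrite ![m%:R + _]addrC !addrNK sub0r add0r !expr_div_n expr1n.
have -> : (2%:R : F) ^+ m = 2%:R ^+ j * 2%:R ^+ (m - j) by rewrite -exprD subnKC.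
by field; rewrite !expf_neq0.
Qed.

(* Reversing the summation turns [rising ((x-y)/2)] into a signed falling
   factorial at [(y-x)/2]. *)
Lemma cay_signed_binom_conv m x y :
  cay m x y = m`!%:R * signed_binom_conv ((x + y) / 2%:R) ((y - x) / 2%:R) m.
Proof.
rewrite /cay /signed_binom_conv mulr_sumr (reindex_inj rev_ord_inj) /=.
apply: eq_bigr => j _; have le_jm : (j <= m)%N by rewrite -ltnS.
rewrite subSS subKn // bin_sub // rising_falling -mulNr opprB.
by rewrite !falling_binomC -(bin_fact le_jm) !natrM; ring.
Qed.

Lemma p_plusC k l : p_plus F k l = p_plus F l k.
Proof.
rewrite /p_plus minnC; apply: eq_bigr => m _.
by rewrite -!mulrA [_ * 'C(l, m)%:R]mulrC.
Qed.

Lemma p_minusC k l : p_minus F k l = p_minus F l k.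
Proof.
rewrite /p_minus minnC; apply: eq_bigr => m _.
by rewrite -!mulrA [_ * 'C(l, m)%:R]mulrC.
Qed.

Lemma p_plus_jacobi k l : (l <= k)%N ->
  p_plus F k l = \sum_(m < l.+1)
    (falling (k%:R : F) m * jacobi m (l%:R - m%:R) (- m%:R) 0) *: 'X^m.
Proof.
move=> le_lk; rewrite /p_plus (minn_idPr le_lk); apply: eq_bigr => m _.
rewrite -[X in jacobi _ _ X]add0r jacobi_at0 signed_binom_conv_nat0.
rewrite falling_nat natrM.
by congr (_ *: _); ring.
Qed.

Lemma p_minus_jacobi k l : (l <= k)%N ->
  p_minus F k l = \sum_(m < l.+1)
    (falling (k%:R : F) m * jacobi m (- m%:R) (l%:R - m%:R) 0) *: 'X^m.
Proof.
move=> le_lk; rewrite /p_minus (minn_idPr le_lk); apply: eq_bigr => m _.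
rewrite -[X in jacobi _ X]add0r jacobi_at0 signed_binom_conv_0nat.
rewrite falling_nat natrM.
by congr (_ *: _); ring.
Qed.

Lemma p_c_jacobi s k :
  p_c s k = \sum_(m < k.+1)
    (falling (k%:R : F) m
       * jacobi m ((k%:R + s - 2%:R * m%:R) / 2%:R)
                  ((k%:R - s - 2%:R * m%:R) / 2%:R) 0) *: 'X^m.
Proof.
rewrite /p_c; apply: eq_bigr => m _.
have -> : (k%:R + s - 2%:R * m%:R) / 2%:R = (s + k%:R) / 2%:R - m%:R by field.
have -> : (k%:R - s - 2%:R * m%:R) / 2%:R = (k%:R - s) / 2%:R - m%:R by field.
rewrite jacobi_at0 cay_signed_binom_conv falling_nat natrM.
by congr (_ *: _); ring.
Qed.

Lemma p_c_nat k : p_c (k%:R : F) k = p_plus F k k.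
Proof.
rewrite p_c_jacobi p_plus_jacobi //; apply: eq_bigr => m _.
by rewrite subrr sub0r; congr (_ * jacobi _ _ _ _ *: _); field.
Qed.

Lemma p_c_Nnat k : p_c (- (k%:R : F)) k = p_minus F k k.
Proof.
rewrite p_c_jacobi p_minus_jacobi //; apply: eq_bigr => m _.
by rewrite addrN sub0r; congr (_ * jacobi _ _ _ _ *: _); field.
Qed.

End JacobiAtZero.

Theorem theorem7p1 (R : realType) :
  (forall k l : nat, (l <= k)%N ->
     p_plus R[i] k l = \sum_(m < l.+1)
       (falling (k%:R : R[i]) m * jacobi m (l%:R - m%:R) (- m%:R) 0) *: 'X^m)
  /\ (forall k l : nat, (k < l)%N ->
     p_plus R[i] k l = \sum_(m < k.+1)
       (falling (l%:R : R[i]) m * jacobi m (k%:R - m%:R) (- m%:R) 0) *: 'X^m)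
  /\ (forall k l : nat, (l <= k)%N ->
     p_minus R[i] k l = \sum_(m < l.+1)
       (falling (k%:R : R[i]) m * jacobi m (- m%:R) (l%:R - m%:R) 0) *: 'X^m)
  /\ (forall k l : nat, (k < l)%N ->
     p_minus R[i] k l = \sum_(m < k.+1)
       (falling (l%:R : R[i]) m * jacobi m (- m%:R) (k%:R - m%:R) 0) *: 'X^m)
  /\ (forall (s : R[i]) (k : nat),
     p_c s k = \sum_(m < k.+1)
       (falling (k%:R : R[i]) m
          * jacobi m ((k%:R + s - 2%:R * m%:R) / 2%:R)
                     ((k%:R - s - 2%:R * m%:R) / 2%:R) 0) *: 'X^m)
  /\ (forall k : nat, p_c (k%:R : R[i]) k = p_plus R[i] k k
                      /\ p_c (- (k%:R : R[i])) k = p_minus R[i] k k).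
Proof.
split; first exact: p_plus_jacobi.
split; first by move=> k l /ltnW le_kl; rewrite p_plusC p_plus_jacobi.
split; first exact: p_minus_jacobi.
split; first by move=> k l /ltnW le_kl; rewrite p_minusC p_minus_jacobi.
split; first exact: p_c_jacobi.
by move=> k; rewrite p_c_nat p_c_Nnat.
Qed.
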